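(* Let $\Omega\subset\mathbb{R}^{n+1}$ be a compact convex body with $C^1$ boundary, let $\Theta\in[0,1)$, and let $r>0$ satisfy $\omega_\Omega(r)<\sqrt{2-2\Theta}$. Then for every $X_0\in\partial\Omega$, $$B^{n+1}_r(X_0)\cap\partial\Omega\subset\partial\Omega^+_\Theta(X_0),$$ and $$\{X\in\mathbb{R}^{n+1}\mid \langle X-X_0,-\mathcal{N}_\Omega(X_0)\rangle\ge\sqrt{1-\Theta^2}\,|X-X_0|\}\cap B^{n+1}_r(X_0)\subset\Omega.$$
   Context: $\mathcal{N}_\Omega(X)$ denotes the (unique) outward unit normal to $\Omega$ at $X\in\partial\Omega$. $\omega_\Omega(r):=\sup\{|\mathcal{N}_\Omega(X_1)-\mathcal{N}_\Omega(X_2)|: X_1,X_2\in\partial\Omega,\ |X_1-X_2|<r\}$. For $\Theta\ge0$ and $X_0\in\partial\Omega$, $\partial\Omega^+_\Theta(X_0):=\{X\in\partial\Omega\mid\langle\mathcal{N}_\Omega(X),\mathcal{N}_\Omega(X_0)\rangle>\Theta\}$. $B^{n+1}_r(X)$ is the open Euclidean ball. *)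

From HB Require Import structures.
From mathcomp Require Import all_boot all_order all_algebra.
From mathcomp Require Import all_classical all_reals all_analysis.
Set Implicit Arguments. Unset Strict Implicit. Unset Printing Implicit Defensive.
Import Order.TTheory GRing.Theory Num.Theory.
Import numFieldNormedType.Exports.
Local Open Scope classical_set_scope.
Local Open Scope ring_scope.

Section Euclid.
Variables (R : realType) (n : nat).
Notation V := 'rV[R]_(n.+1).

Definition edot (u v : V) : R := \sum_(i < n.+1) u 0 i * v 0 i.
Definition enorm (u : V) : R := Num.sqrt (edot u u).

Definition eball (X : V) (r : R) : set V := [set Y | enorm (Y - X) < r].

Definition convex_set (O : set V) : Prop :=
  forall X Y (t : R), O X -> O Y -> 0 <= t <= 1 -> O ((1 - t) *: X + t *: Y).

Definition convex_body (O : set V) : Prop :=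
  compact O /\ convex_set O /\ exists X, exists2 e : R, 0 < e & eball X e `<=` O.

Definition bdry (O : set V) : set V :=
  [set X | forall e : R, 0 < e ->
     (exists Y, O Y /\ enorm (Y - X) < e) /\ (exists Y, ~ O Y /\ enorm (Y - X) < e)].

Definition ebasis (i : 'I_n.+1) : V := delta_mx 0 i.

Definition egrad (F : V -> R) (X : V) : V := \row_i ('D_(ebasis i) F X).

Definition C1_boundary (O : set V) : Prop :=
  forall X0, bdry O X0 -> exists2 rho : R, 0 < rho &
    exists F : V -> R,
      (forall X, eball X0 rho X ->
         (forall i, derivable F X (ebasis i)) /\
         (forall i, {for X, continuous (fun Y => 'D_(ebasis i) F Y)}) /\
         egrad F X != 0 /\
         (O X <-> F X <= 0)).

Definition outward_unit_normal (O : set V) (X nu : V) : Prop :=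
  enorm nu = 1 /\ forall Y, O Y -> edot (Y - X) nu <= 0.

Definition omega (O : set V) (N : V -> V) (r : R) : R :=
  sup [set d | exists X1 X2, [/\ bdry O X1, bdry O X2, enorm (X1 - X2) < r &
                                 d = enorm (N X1 - N X2)]].

Definition bdry_plus (O : set V) (N : V -> V) (Theta : R) (X0 : V) : set V :=
  [set X | bdry O X /\ edot (N X) (N X0) > Theta].

End Euclid.

From Pilot Require Import Defs.
From HB Require Import structures.
From mathcomp Require Import all_boot all_order all_algebra.
From mathcomp Require Import all_classical all_reals all_analysis.
From mathcomp Require Import ring lra.
Import Order.TTheory GRing.Theory Num.Theory.
Import numFieldNormedType.Exports.
Local Open Scope classical_set_scope.
Local Open Scope ring_scope.

(* For unit normals, |N X - N X0|^2 = 2 - 2 <N X, N X0>, so the bound on the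
   modulus of continuity gives <N X, N X0> > Theta near X0.  If a point X of the
   cone lay outside Omega, walk from X towards an interior point Z close to X0:
   one leaves the complement at a boundary point Y, strictly before Z and within
   r of X0.  As <N Y, N X0> > Theta, every nonzero vector D of the cone has
   <D, N Y> < 0; but the supporting half-space at Y contains X0 and Z, and Y lies
   between X and Z, which forces <X - X0, N Y> >= 0. *)

Section EuclideanSpace.
Context {R : realType} {n : nat}.
Notation V := 'rV[R]_(n.+1).
Implicit Types (u v w : V).

Lemma edotC u v : edot u v = edot v u.
Proof. by apply: eq_bigr => i _; rewrite mulrC. Qed.

Lemma edotDl u v w : edot (u + v) w = edot u w + edot v w.
Proof. by rewrite /edot -big_split; apply: eq_bigr => i _; rewrite !mxE mulrDl. Qed.

Lemma edotZl (k : R) u w : edot (k *: u) w = k * edot u w.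
Proof. by rewrite /edot mulr_sumr; apply: eq_bigr => i _; rewrite !mxE mulrA. Qed.

Lemma edotNl u w : edot (- u) w = - edot u w.
Proof. by rewrite -scaleN1r edotZl mulN1r. Qed.

Lemma edotBl u v w : edot (u - v) w = edot u w - edot v w.
Proof. by rewrite edotDl edotNl. Qed.

Lemma edotDr u v w : edot w (u + v) = edot w u + edot w v.
Proof. by rewrite edotC edotDl !(edotC w). Qed.

Lemma edotZr (k : R) u w : edot w (k *: u) = k * edot w u.
Proof. by rewrite edotC edotZl edotC. Qed.

Lemma edotNr u w : edot w (- u) = - edot w u.
Proof. by rewrite edotC edotNl edotC. Qed.

Lemma edotBr u v w : edot w (u - v) = edot w u - edot w v.
Proof. by rewrite edotDr edotNr. Qed.

Lemma edotxx_ge0 u : 0 <= edot u u.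
Proof. by apply: sumr_ge0 => i _; rewrite -expr2 sqr_ge0. Qed.

Lemma edotxx_eq0 u : (edot u u == 0) = (u == 0).
Proof.
apply/eqP/eqP => [u0|->]; last by rewrite /edot big1 // => i _; rewrite mxE mul0r.
apply/rowP => i; apply/eqP; rewrite mxE -sqrf_eq0 expr2.
have /psumr_eq0P u0i := u0; rewrite u0i // => j _.
by rewrite -expr2 sqr_ge0.
Qed.

Lemma sqr_enorm u : enorm u ^+ 2 = edot u u.
Proof. by rewrite sqr_sqrtr // edotxx_ge0. Qed.

Lemma enorm_ge0 u : 0 <= enorm u.
Proof. exact: sqrtr_ge0. Qed.

Lemma cauchy_schwarz u v : edot u v ^+ 2 <= edot u u * edot v v.
Proof.
have [u0|uN0] := eqVneq u 0.
  by rewrite u0 -(scale0r (0 : V)) !edotZl !mul0r expr0n.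
have A0 : 0 < edot u u by rewrite lt0r edotxx_eq0 uN0 edotxx_ge0.
set A := edot u u; set B := edot v v; set x := edot u v.
have := edotxx_ge0 (A *: v - x *: u).
rewrite !(edotBl, edotBr, edotZl, edotZr) (edotC v u) -/A -/B -/x => H.
have : 0 <= A * (A * B - x ^+ 2) by move: H; congr (_ <= _); ring.
by rewrite pmulr_rge0 // subr_ge0.
Qed.

Lemma edot_le_enorm u v : edot u v <= enorm u * enorm v.
Proof.
have hp : 0 <= enorm u * enorm v by rewrite mulr_ge0 // enorm_ge0.
have [hx|hx] := lerP (edot u v) 0; first exact: le_trans hx hp.
rewrite -(ler_pXn2r (n := 2)) ?nnegrE ?(ltW hx) //.
by rewrite exprMn !sqr_enorm cauchy_schwarz.
Qed.

Lemma ler_enormD u v : enorm (u + v) <= enorm u + enorm v.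
Proof.
rewrite -(ler_pXn2r (n := 2)) ?nnegrE ?addr_ge0 ?enorm_ge0 //.
rewrite sqr_enorm sqrrD !sqr_enorm !(edotDl, edotDr) (edotC v u).
have := edot_le_enorm u v; lra.
Qed.

Lemma enormZ (k : R) u : enorm (k *: u) = `|k| * enorm u.
Proof. by rewrite /enorm edotZl edotZr mulrA -expr2 sqrtrM ?sqr_ge0 // sqrtr_sqr. Qed.

Lemma enormN u : enorm (- u) = enorm u.
Proof. by rewrite -scaleN1r enormZ normrN normr1 mul1r. Qed.

Lemma enorm0 : enorm (0 : V) = 0.
Proof. by rewrite -(scale0r (0 : V)) enormZ normr0 mul0r. Qed.

Lemma ler_coord_enorm u i : `|u 0 i| <= enorm u.
Proof.
rewrite -sqrtr_sqr ler_sqrt ?edotxx_ge0 // /edot (bigD1 i) //= -expr2 lerDl.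
by apply: sumr_ge0 => j _; rewrite -expr2 sqr_ge0.
Qed.

Lemma enorm_convex_lt u v (t r : R) : 0 <= t <= 1 -> enorm u < r -> enorm v < r ->
  enorm ((1 - t) *: u + t *: v) < r.
Proof.
move=> /andP[t0 t1] ur vr; apply: le_lt_trans (ler_enormD _ _) _.
rewrite !enormZ !ger0_norm ?subr_ge0 //.
have [->|tN0] := eqVneq t 0; first by rewrite subr0 mul1r mul0r addr0.
have : t * enorm v < t * r by rewrite ltr_pM2l // lt_def tN0.
have : (1 - t) * enorm u <= (1 - t) * r by rewrite ler_wpM2l ?subr_ge0 ?(ltW ur).
lra.
Qed.

Lemma unit_edot_gt (u v : V) (Theta : R) : edot u u = 1 -> edot v v = 1 -> Theta < 1 ->
  enorm (u - v) < Num.sqrt (2 - 2 * Theta) -> Theta < edot u v.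
Proof.
move=> u1 v1 T1; rewrite ltr_sqrt; last lra.
by rewrite !(edotBl, edotBr) u1 v1 (edotC v u); lra.
Qed.

Lemma cone_edot_lt0 {D u nu : V} {Theta : R} : edot u u = 1 -> edot nu nu = 1 ->
  0 <= Theta < edot nu u -> D != 0 ->
  Num.sqrt (1 - Theta ^+ 2) * enorm D <= edot D (- u) -> edot D nu < 0.
Proof.
move=> u1 nu1 /andP[T0 Ta] D0 cone.
set a := edot nu u in Ta; set c := edot D (- u) in cone.
set E := edot D D; set x := edot D nu.
have E0 : 0 < E by rewrite lt0r edotxx_eq0 D0 edotxx_ge0.
have a1 : a <= 1.
  by have := edot_le_enorm nu u; rewrite /enorm u1 nu1 sqrtr1 mulr1.
have c0 : 0 <= c.
  by apply: le_trans cone; rewrite mulr_ge0 ?sqrtr_ge0 ?enorm_ge0.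
have cE : (1 - Theta ^+ 2) * E <= c ^+ 2.
  rewrite /E -sqr_enorm -(sqr_sqrtr (a := 1 - Theta ^+ 2)) -?exprMn; last nra.
  by rewrite ler_pXn2r ?nnegrE ?mulr_ge0 ?sqrtr_ge0 ?enorm_ge0.
(* Cauchy-Schwarz for the components of [D] and [nu] orthogonal to [u]. *)
have := cauchy_schwarz (D + c *: u) (nu - a *: u).
rewrite !(edotDl, edotDr, edotNl, edotNr, edotZl, edotZr) u1 nu1.
rewrite (edotC u nu) (edotC u D) -/a -/x -/E.
have -> : edot D u = - c by rewrite /c edotNr opprK.
move=> hCS.
have {}hCS : (x + a * c) ^+ 2 <= (1 - a ^+ 2) * E - c ^+ 2 + (a * c) ^+ 2.
  by move: hCS; congr (_ <= _); ring.
have aE : (1 - a ^+ 2) * E < (1 - Theta ^+ 2) * E by rewrite ltr_pM2r //; nra.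
have ac0 : 0 <= a * c by rewrite mulr_ge0 //; lra.
nra.
Qed.

End EuclideanSpace.

Section BoundaryGeometry.
Context {R : realType} {n : nat} {O : set 'rV[R]_(n.+1)}.
Notation V := 'rV[R]_(n.+1).

Lemma closed_bdry_sub {X : V} : closed O -> bdry O X -> O X.
Proof.
move=> clO bX; apply: clO => B /nbhs_ballP[e e0 eB].
have [[Y [OY YX]] _] := bX e e0.
exists Y; split => //; apply: eB; split => // i j.
rewrite (ord1 i) /ball /= -normrN opprB.
by apply: le_lt_trans YX; have := ler_coord_enorm (Y - X) j; rewrite !mxE.
Qed.

Lemma eball_sub_notin_bdry {Z : V} {d : R} : 0 < d -> eball Z d `<=` O -> ~ bdry O Z.
Proof. by move=> d0 ZdO /(_ d d0)[_ [Y [nOY YZ]]]; apply/nOY/ZdO. Qed.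

Lemma enorm_segment (X W : V) (l m : R) :
  enorm ((X + l *: W) - (X + m *: W)) = `|l - m| * enorm W.
Proof. by rewrite opprD addrACA subrr add0r -scalerBl enormZ. Qed.

Lemma segment_bdry {X Z : V} : ~ O X -> O Z ->
  exists2 lam, 0 <= lam <= 1 & bdry O (X + lam *: (Z - X)).
Proof.
move=> nOX OZ; set W := Z - X.
set S := [set l : R | 0 <= l <= 1 /\ O (X + l *: W)].
have S1 : S 1 by rewrite /S /= ler01 lexx scale1r /W addrC subrK.
have Slb : has_lbound S by exists 0 => l [/andP[]].
have S0 : S !=set0 by exists 1.
set lam := inf S.
have lam0 : 0 <= lam by apply: lb_le_inf => // l [/andP[]].
have lam1 : lam <= 1 by exact: ge_inf Slb _ S1.
have outS l : 0 <= l < lam -> ~ O (X + l *: W).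
  move=> /andP[l0 llam] OXl; suff : lam <= l by lra.
  by apply: (ge_inf Slb); split => //; rewrite l0 /=; lra.
exists lam; first by rewrite lam0.
move=> e e0; set t := e / (enorm W + 1).
have W1 : 0 < enorm W + 1 by rewrite ltr_wpDl ?enorm_ge0.
have t0 : 0 < t by rewrite divr_gt0.
have tW : t * enorm W < e.
  have : t * (enorm W + 1) = e by rewrite mulfVK ?gt_eqF.
  nra.
split.
- have [l Sl ltl] : exists2 l, S l & l < lam + t by apply: inf_lt; rewrite // ltrDl.
  have lamle := ge_inf Slb Sl.
  exists (X + l *: W); split; first by case: Sl.
  rewrite enorm_segment ger0_norm ?subr_ge0 //.
  apply: le_lt_trans tW; rewrite ler_wpM2r ?enorm_ge0 //; lra.
- have [lam_eq0|lam_neq0] := eqVneq lam 0.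
    by exists X; split; rewrite // lam_eq0 scale0r addr0 subrr enorm0.
  set l := Num.max 0 (lam - t).
  have ll : 0 <= l < lam by rewrite le_max lexx gt_max lt_def lam_neq0 lam0 gtrBl.
  exists (X + l *: W); split; first exact: outS.
  rewrite enorm_segment ler0_norm; last lra.
  apply: le_lt_trans tW; rewrite ler_wpM2r ?enorm_ge0 //.
  by rewrite opprB lerBlDr -lerBlDl le_max lexx orbT.
Qed.

Lemma convex_interior_point_near {P X0 : V} {e r : R} : Defs.convex_set O ->
  0 < e -> eball P e `<=` O -> O X0 -> 0 < r ->
  exists2 Z, enorm (Z - X0) < r & exists2 d, 0 < d & eball Z d `<=` O.
Proof.
move=> convO e0 PeO OX0 r0; set L := enorm (P - X0).
have L0 : 0 <= L := enorm_ge0 _.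
(* The homothety of ratio [t] centred at [X0] maps [eball P e] into [O]. *)
set t := r / (r + L).
have t0 : 0 < t by rewrite divr_gt0 // ltr_wpDr.
have t1 : t <= 1 by rewrite ler_pdivrMr ?mul1r ?lerDl // ltr_wpDr.
exists (X0 + t *: (P - X0)).
  rewrite addrC addKr enormZ gtr0_norm // -/L mulrAC ltr_pdivrMr ?ltr_wpDr //.
  by rewrite ltr_pM2l // ltrDr.
exists (t * e); first exact: mulr_gt0.
move=> Y /= Yt.
have -> : Y = (1 - t) *: X0 + t *: (P + t^-1 *: (Y - (X0 + t *: (P - X0)))).
  by apply/rowP => i; rewrite !mxE; field; rewrite gt_eqF.
apply: convO => //; last by rewrite ltW.
apply: PeO; rewrite /eball /= addrAC subrr add0r enormZ ger0_norm ?invr_ge0 ?ltW //.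
by rewrite mulrC ltr_pdivrMr // mulrC.
Qed.

Lemma normal_segment_ge0 {X Y Z X0 nu : V} {lam : R} :
  outward_unit_normal O Y nu -> O Z -> O X0 -> 0 <= lam < 1 ->
  Y = X + lam *: (Z - X) -> 0 <= edot (X - X0) nu.
Proof.
move=> [_ nuY] OZ OX0 /andP[lam0 lam1] YE; subst Y.
have ZY : Z - (X + lam *: (Z - X)) = (1 - lam) *: (Z - X).
  by apply/rowP => i; rewrite !mxE; ring.
have X0Y : X0 - (X + lam *: (Z - X)) = - (X - X0) - lam *: (Z - X).
  by apply/rowP => i; rewrite !mxE; ring.
have := nuY _ OZ; have := nuY _ OX0.
rewrite ZY X0Y edotZl [edot (_ - _ *: _) _]edotBl edotNl edotZl.
nra.
Qed.

Lemma omega_ge (N : V -> V) (r : R) (X1 X2 : V) :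
  (forall X, bdry O X -> enorm (N X) = 1) -> bdry O X1 -> bdry O X2 ->
  enorm (X1 - X2) < r -> enorm (N X1 - N X2) <= omega O N r.
Proof.
move=> N1 bX1 bX2 X12; apply: ub_le_sup; last by exists X1, X2.
exists 2 => _ [Y1 [Y2 [bY1 bY2 _ ->]]].
by apply: le_trans (ler_enormD _ _) _; rewrite enormN !N1 // lexx.
Qed.

End BoundaryGeometry.

Theorem lemma2p8 (R : realType) (n : nat) (Omega : set 'rV[R]_(n.+1))
  (N : 'rV[R]_(n.+1) -> 'rV[R]_(n.+1)) (Theta r : R) :
  convex_body Omega -> C1_boundary Omega ->
  (forall X, bdry Omega X -> outward_unit_normal Omega X (N X)) ->
  0 <= Theta < 1 -> 0 < r ->
  omega Omega N r < Num.sqrt (2 - 2 * Theta) ->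
  forall X0, bdry Omega X0 ->
    (eball X0 r `&` bdry Omega `<=` bdry_plus Omega N Theta X0) /\
    ([set X | edot (X - X0) (- N X0) >= Num.sqrt (1 - Theta ^+ 2) * enorm (X - X0)]
       `&` eball X0 r `<=` Omega).
Proof.
move=> [cO [convO [P [e e0 PeO]]]] _ HN /andP[T0 T1] r0 hom X0 bX0.
have N1 X : bdry Omega X -> edot (N X) (N X) = 1.
  by move=> /HN[NX _]; rewrite -sqr_enorm NX expr1n.
have near_gt X : bdry Omega X -> enorm (X - X0) < r -> Theta < edot (N X) (N X0).
  move=> bX XX0; apply: unit_edot_gt; rewrite ?N1 //.
  by apply: le_lt_trans hom; apply: omega_ge => // Y /HN[].
split=> [X [XX0 bX] | X [/= cone XX0]]; first by split=> //; apply: near_gt.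
have OX0 : Omega X0 by apply: closed_bdry_sub bX0; apply: compact_closed.
apply: contrapT => nOX.
have [Z ZX0 [d d0 ZdO]] := convex_interior_point_near convO e0 PeO OX0 r0.
have OZ : Omega Z by apply: ZdO; rewrite /eball /= subrr enorm0.
have [lam /andP[lam0 lam1] bY] := segment_bdry nOX OZ.
set Y := X + lam *: (Z - X) in bY.
have lam_lt1 : lam < 1.
  rewrite lt_neqAle lam1 andbT; apply/eqP => lamE.
  by apply: (eball_sub_notin_bdry d0 ZdO); rewrite /Y lamE scale1r addrC subrK in bY.
have YX0 : enorm (Y - X0) < r.
  have -> : Y - X0 = (1 - lam) *: (X - X0) + lam *: (Z - X0).
    by apply/rowP => i; rewrite !mxE; ring.
  by apply: enorm_convex_lt; rewrite ?lam0.
have D0 : X - X0 != 0 by rewrite subr_eq0; apply: contraPneq nOX => ->.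
have := cone_edot_lt0 (N1 _ bX0) (N1 _ bY) _ D0 cone.
have := normal_segment_ge0 (HN _ bY) OZ OX0 _ erefl.
rewrite lam0 lam_lt1 T0 near_gt //.
lra.
Qed.
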